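(* Let $(G,u)$ be a unital po-group satisfying RIP such that the pseudo effect algebra $E=\Gamma(G,u)$ satisfies RDP (respectively RDP$_1$). Let $m,n\ge1$ and suppose $a_1+\cdots+a_m=b_1+\cdots+b_n$ in $G$, where $a_1,\ldots,a_{m-1},b_1,\ldots,b_{n-1}\in E$ and $a_m,b_n\in G^+$. Then for $\{a_i\}$ and $\{b_j\}$ the $(m,n)$-RDP (respectively the $(m,n)$-RDP$_1$) holds in $G$, i.e. there are $c_{ij}\in G^+$ ($1\le i\le m$, $1\le j\le n$) with $a_i=\sum_{j=1}^n c_{ij}$ and $b_j=\sum_{i=1}^m c_{ij}$ for all $i,j$ (and, in the RDP$_1$ case, additionally $c_{i+1,j}+\cdots+c_{mj}\ \mathbf{com}\ c_{i,j+1}+\cdots+c_{in}$ for all $1\le i<m$, $1\le j<n$).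
   Context: A po-group is a (not necessarily Abelian, additively written) group with a partial order $\le$ such that $a\le b$ implies $x+a+y\le x+b+y$; $G^+$ is its positive cone. A unital po-group $(G,u)$ is a po-group with a strong unit $u\in G^+$ (for each $g\in G$ there is $k\ge1$ with $g\le ku$). $\Gamma(G,u)=\{g\in G:0\le g\le u\}$ is a pseudo effect algebra with constants $0,u$ and partial addition: $a+b$ is defined (equal to the group sum) iff $a+b\le u$. RIP: whenever $a_i\le b_j$ for all $i,j\in\{1,2\}$, there is $c$ with $a_i\le c\le b_j$ for all $i,j$. For $a,b\in G^+$, $a\ \mathbf{com}\ b$ means $x+y=y+x$ for all $0\le x\le a$, $0\le y\le b$. RDP for a pseudo effect algebra $E$: whenever $a_1+a_2=b_1+b_2$ in $E$, there are $c_{11},c_{12},c_{21},c_{22}\in E$ with $a_1=c_{11}+c_{12}$, $a_2=c_{21}+c_{22}$, $b_1=c_{11}+c_{21}$, $b_2=c_{12}+c_{22}$ (all sums defined); RDP$_1$ additionally requires that $x\le c_{12}$, $y\le c_{21}$ in $E$ imply $x+y=y+x$. *)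

From mathcomp Require Import all_boot.
Set Implicit Arguments. Unset Strict Implicit. Unset Printing Implicit Defensive.

(* A (not necessarily Abelian, additively written) po-group on a carrier T,
   given by explicit operations add, opp, zero and a partial order le. *)
Record is_pogroup (T : Type) (add : T -> T -> T) (opp : T -> T) (zero : T)
    (le : T -> T -> Prop) : Prop := {
  pg_addA : forall x y z, add x (add y z) = add (add x y) z;
  pg_add0l : forall x, add zero x = x;
  pg_addr0 : forall x, add x zero = x;
  pg_addNl : forall x, add (opp x) x = zero;
  pg_addrN : forall x, add x (opp x) = zero;
  pg_le_refl : forall x, le x x;
  pg_le_anti : forall x y, le x y -> le y x -> x = y;
  pg_le_trans : forall x y z, le x y -> le y z -> le x z;
  pg_le_compat : forall a b x y, le a b -> le (add (add x a) y) (add (add x b) y)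
}.

Section PoGroup.
Variables (T : Type) (add : T -> T -> T) (zero : T) (le : T -> T -> Prop).

Fixpoint nmul (k : nat) (u : T) : T :=
  match k with O => zero | S k' => add u (nmul k' u) end.

Definition strong_unit (u : T) : Prop :=
  le zero u /\ forall g, exists k, (1 <= k)%N /\ le g (nmul k u).

Definition RIP : Prop :=
  forall a1 a2 b1 b2, le a1 b1 -> le a1 b2 -> le a2 b1 -> le a2 b2 ->
    exists c, le a1 c /\ le a2 c /\ le c b1 /\ le c b2.

Definition inGamma (u x : T) : Prop := le zero x /\ le x u.

Definition com (a b : T) : Prop :=
  forall x y, le zero x -> le x a -> le zero y -> le y b -> add x y = add y x.

(* RDP for E = Gamma(G,u): a1+a2 = b1+b2 in E (i.e. all in E, sums defined) *)
Definition RDP_Gamma (u : T) : Prop :=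
  forall a1 a2 b1 b2, inGamma u a1 -> inGamma u a2 -> inGamma u b1 -> inGamma u b2 ->
    le (add a1 a2) u -> add a1 a2 = add b1 b2 ->
    exists c11 c12 c21 c22,
      inGamma u c11 /\ inGamma u c12 /\ inGamma u c21 /\ inGamma u c22 /\
      a1 = add c11 c12 /\ a2 = add c21 c22 /\ b1 = add c11 c21 /\ b2 = add c12 c22.

(* RDP_1 for E = Gamma(G,u) (order of E = order of G restricted to [0,u]) *)
Definition RDP1_Gamma (u : T) : Prop :=
  forall a1 a2 b1 b2, inGamma u a1 -> inGamma u a2 -> inGamma u b1 -> inGamma u b2 ->
    le (add a1 a2) u -> add a1 a2 = add b1 b2 ->
    exists c11 c12 c21 c22,
      inGamma u c11 /\ inGamma u c12 /\ inGamma u c21 /\ inGamma u c22 /\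
      a1 = add c11 c12 /\ a2 = add c21 c22 /\ b1 = add c11 c21 /\ b2 = add c12 c22 /\
      (forall x y, inGamma u x -> inGamma u y -> le x c12 -> le y c21 ->
         add x y = add y x).

Definition gsum (s : seq T) : T := foldr add zero s.

(* (m,n)-RDP for a_0..a_{m-1}, b_0..b_{n-1} (0-indexed) *)
Definition mnRDP (m n : nat) (a b : nat -> T) (c : nat -> nat -> T) : Prop :=
  (forall i j, (i < m)%N -> (j < n)%N -> le zero (c i j)) /\
  (forall i, (i < m)%N -> a i = gsum [seq c i j | j <- iota 0 n]) /\
  (forall j, (j < n)%N -> b j = gsum [seq c i j | i <- iota 0 m]).

(* the additional commutation condition of (m,n)-RDP_1:
   c_{i+1,j}+...+c_{m,j} com c_{i,j+1}+...+c_{i,n}, 1<=i<m, 1<=j<n (1-indexed) *)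
Definition mnRDP1_com (m n : nat) (c : nat -> nat -> T) : Prop :=
  forall i j, (i < m.-1)%N -> (j < n.-1)%N ->
    com (gsum [seq c k j | k <- iota i.+1 (m - i.+1)])
        (gsum [seq c i l | l <- iota j.+1 (n - j.+1)]).

End PoGroup.

From mathcomp Require Import all_boot.
Set Implicit Arguments. Unset Strict Implicit.

(* The decomposition is built one 2x2 step at a time.  Given [x + y = b0 + B]
   with [x, b0] in [[0,u]] and [y, B >= 0], RIP yields [t <= u, x + y] above
   both [x] and [b0]; RDP of [[0,u]] applied to [x + (-x + t) = b0 + (-b0 + t)],
   with the nonnegative remainder [-t + (x + y)] absorbed into the last corner,
   decomposes [x + y = b0 + B] in [G].  Iterating along the [b]'s gives the
   (2,n) case and iterating that along the [a]'s the (m,n) case, the unbounded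
   last terms [a_m], [b_n] travelling along as remainders.  Each commutation
   condition of RDP_1 is produced by exactly one 2x2 step. *)

Lemma map_iotaS (A : Type) (f : nat -> A) i l :
  [seq f k | k <- iota i.+1 l] = [seq f k.+1 | k <- iota i l].
Proof. by rewrite -add1n iotaDl -map_comp. Qed.

Section Decomposition.
Variables (T : Type) (add : T -> T -> T) (opp : T -> T) (zero : T)
  (le : T -> T -> Prop) (u : T).
Hypothesis Hpog : is_pogroup add opp zero le.

Local Notation E := (inGamma zero le u).
Local Notation sub z w := (add (opp z) w).

Lemma le_add2l x a b : le a b -> le (add x a) (add x b).
Proof. by move=> Hab; have := pg_le_compat Hpog x zero Hab; rewrite !(pg_addr0 Hpog). Qed.

Lemma le_add2r y a b : le a b -> le (add a y) (add b y).
Proof. by move=> Hab; have := pg_le_compat Hpog zero y Hab; rewrite !(pg_add0l Hpog). Qed.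

Lemma le_addr_ge0 x y : le zero y -> le x (add x y).
Proof. by move=> Hy; have := le_add2l x Hy; rewrite (pg_addr0 Hpog). Qed.

Lemma le_addl_ge0 x y : le zero x -> le y (add x y).
Proof. by move=> Hx; have := le_add2r y Hx; rewrite (pg_add0l Hpog). Qed.

Lemma add_ge0 x y : le zero x -> le zero y -> le zero (add x y).
Proof. by move=> Hx Hy; apply: (pg_le_trans Hpog) Hx _; apply: le_addr_ge0. Qed.

Lemma addKsub z w : add z (sub z w) = w.
Proof. by rewrite (pg_addA Hpog) (pg_addrN Hpog) (pg_add0l Hpog). Qed.

Lemma addrI x : injective (add x).
Proof.
move=> y z Hyz; rewrite -(pg_add0l Hpog y) -(pg_add0l Hpog z) -(pg_addNl Hpog x).
by rewrite -!(pg_addA Hpog) Hyz.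
Qed.

Lemma sub_ge0 z w : le z w -> le zero (sub z w).
Proof. by move=> Hzw; have := le_add2l (opp z) Hzw; rewrite (pg_addNl Hpog). Qed.

Lemma le_sub z w : le zero z -> le (sub z w) w.
Proof.
move=> Hz; have := le_add2l (opp z) Hz.
rewrite (pg_addNl Hpog) (pg_addr0 Hpog) => Hoz.
by have := le_add2r w Hoz; rewrite (pg_add0l Hpog).
Qed.

Lemma inGamma_le x y : E y -> le zero x -> le x y -> E x.
Proof. by move=> [_ Hyu] Hx Hxy; split=> //; apply: (pg_le_trans Hpog) Hyu. Qed.

Definition psum (f : nat -> T) n := gsum add zero [seq f i | i <- iota 0 n].

Lemma psumS f n : psum f n.+1 = add (f 0) (psum (fun i => f i.+1) n).
Proof. by rewrite /psum /= map_iotaS. Qed.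

Lemma psum1 f : psum f 1 = f 0.
Proof. exact: (pg_addr0 Hpog). Qed.

Lemma psum_ge0 f n : (forall i, (i < n)%N -> le zero (f i)) -> le zero (psum f n).
Proof.
elim: n f => [|n IH] f Hf; first exact: (pg_le_refl Hpog).
by rewrite psumS; apply: add_ge0; [apply: Hf | apply: IH => i Hi; apply: Hf].
Qed.

Lemma ge0_Gamma_prefix f n : (forall j, (j < n)%N -> E (f j)) -> le zero (f n) ->
  forall j, (j <= n)%N -> le zero (f j).
Proof.
move=> Hf Hn j; rewrite leq_eqVlt => /orP[/eqP -> // | Hj].
by case: (Hf j Hj).
Qed.

Lemma psum_tail_ge0 f n : (forall j, (j < n)%N -> E (f j)) -> le zero (f n) ->
  le zero (psum (fun i => f i.+1) n).
Proof. by move=> Hf Hn; apply: psum_ge0 => i Hi; apply: (ge0_Gamma_prefix Hf Hn). Qed.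

(* RDP of [[0,u]] in which the cross terms [c21], [c12] moreover satisfy [Q];
   [Q] is trivial for RDP and commutation for RDP_1. *)
Definition RDP_Gamma_with (Q : T -> T -> Prop) : Prop :=
  forall a1 a2 b1 b2, E a1 -> E a2 -> E b1 -> E b2 ->
    le (add a1 a2) u -> add a1 a2 = add b1 b2 ->
    exists c11 c12 c21 c22,
      E c11 /\ E c12 /\ E c21 /\ E c22 /\
      a1 = add c11 c12 /\ a2 = add c21 c22 /\ b1 = add c11 c21 /\ b2 = add c12 c22 /\
      Q c21 c12.

Lemma RDP_Gamma_withT : RDP_Gamma add zero le u -> RDP_Gamma_with (fun _ _ => True).
Proof.
move=> Hrdp a1 a2 b1 b2 H1 H2 H3 H4 Hle Heq.
have [c11 [c12 [c21 [c22 [? [? [? [? [? [? [? ?]]]]]]]]]]] :=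
  Hrdp _ _ _ _ H1 H2 H3 H4 Hle Heq.
by exists c11, c12, c21, c22.
Qed.

Lemma RDP_Gamma_with_com : RDP1_Gamma add zero le u -> RDP_Gamma_with (com add zero le).
Proof.
move=> Hrdp a1 a2 b1 b2 H1 H2 H3 H4 Hle Heq.
have [c11 [c12 [c21 [c22 [G11 [G12 [G21 [G22 [? [? [? [? Hcom]]]]]]]]]]]] :=
  Hrdp _ _ _ _ H1 H2 H3 H4 Hle Heq.
exists c11, c12, c21, c22; do 8!(split=> //).
move=> x y Hx0 Hx Hy0 Hy.
by rewrite (Hcom y x (inGamma_le G12 Hy0 Hy) (inGamma_le G21 Hx0 Hx) Hy Hx).
Qed.

Hypothesis Hrip : RIP le.
Variable Q : T -> T -> Prop.
Hypothesis HQ : RDP_Gamma_with Q.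

Lemma decomposition_2_2 x y b0 B : E x -> E b0 -> le zero y -> le zero B ->
  add x y = add b0 B ->
  exists c11 c12 c21 c22, le zero c11 /\ E c12 /\ le zero c21 /\ le zero c22 /\
    x = add c11 c12 /\ y = add c21 c22 /\ b0 = add c11 c21 /\ B = add c12 c22 /\
    Q c21 c12.
Proof.
move=> [Hx0 Hxu] [Hb0 Hbu] Hy HB Hs.
set s := add x y.
have Hxs : le x s by apply: le_addr_ge0.
have Hbs : le b0 s by rewrite /s Hs; apply: le_addr_ge0.
have [t [Hxt [Hbt [Hts Htu]]]] := Hrip Hxs Hxu Hbs Hbu.
have Ep : E (sub x t).
  by split; [apply: sub_ge0 | apply: (pg_le_trans Hpog) (le_sub _ Hx0) Htu].
have Eq : E (sub b0 t).
  by split; [apply: sub_ge0 | apply: (pg_le_trans Hpog) (le_sub _ Hb0) Htu].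
have Hpu : le (add x (sub x t)) u by rewrite addKsub.
have Hpq : add x (sub x t) = add b0 (sub b0 t) by rewrite !addKsub.
have [c11 [c12 [c21 [c22 [[H11 _] [H12 [[H21 _] [[H22 _]
     [E1 [E2 [E3 [E4 HQ']]]]]]]]]]]] := HQ (conj Hx0 Hxu) Ep (conj Hb0 Hbu) Eq Hpu Hpq.
set r := sub t s.
have Hr : le zero r by apply: sub_ge0.
have Htr : add t r = s by apply: addKsub.
exists c11, c12, c21, (add c22 r); do 8?split => //.
- exact: add_ge0.
- apply: (addrI (x:=x)).
  by rewrite (pg_addA Hpog c21) -E2 (pg_addA Hpog) addKsub Htr.
- apply: (addrI (x:=b0)).
  by rewrite (pg_addA Hpog c12) -E4 (pg_addA Hpog) addKsub Htr.
Qed.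

Lemma decomposition_2_n n x y (b : nat -> T) : E x -> le zero y ->
  (forall j, (j < n)%N -> E (b j)) -> le zero (b n) -> add x y = psum b n.+1 ->
  exists c1 c2 : nat -> T,
    (forall j, (j <= n)%N -> le zero (c1 j) /\ le zero (c2 j)) /\
    x = psum c1 n.+1 /\ y = psum c2 n.+1 /\
    (forall j, (j <= n)%N -> b j = add (c1 j) (c2 j)) /\
    (forall j, (j < n)%N -> Q (c2 j) (gsum add zero [seq c1 l | l <- iota j.+1 (n - j)])).
Proof.
elim: n x y b => [|n IH] x y b Ex Hy Hb Hbn Hs.
  exists (fun _ => x), (fun _ => y); rewrite !psum1.
  by do 4?split => //; [case: Ex | case=> // _; rewrite Hs psum1].
rewrite psumS in Hs.
have HB := psum_tail_ge0 Hb Hbn.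
have [c11 [c12 [c21 [c22 [H11 [E12 [H21 [H22 [E1 [E2 [E3 [E4 Q1]]]]]]]]]]]] :=
  decomposition_2_2 Ex (Hb 0 erefl) Hy HB Hs.
have [d1 [d2 [Hd [F1 [F2 [F3 F4]]]]]] :=
  IH c12 c22 (fun j => b j.+1) E12 H22 (fun j Hj => Hb j.+1 Hj) Hbn (esym E4).
exists (fun j => if j is k.+1 then d1 k else c11),
       (fun j => if j is k.+1 then d2 k else c21).
split; [|split; [|split; [|split]]].
- by case=> [|j] Hj; [split | apply: Hd].
- by rewrite psumS E1 F1.
- by rewrite psumS E2 F2.
- by case=> [|j] Hj //; apply: F3.
- case=> [|j] Hj; rewrite map_iotaS; last exact: F4.
  by move: Q1; rewrite F1 subn0.
Qed.

Lemma decomposition_m_n m n (a b : nat -> T) :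
  (forall i, (i < m)%N -> E (a i)) -> (forall j, (j < n)%N -> E (b j)) ->
  le zero (a m) -> le zero (b n) -> psum a m.+1 = psum b n.+1 ->
  exists c : nat -> nat -> T, mnRDP add zero le m.+1 n.+1 a b c /\
    (forall i j, (i < m)%N -> (j < n)%N ->
      Q (gsum add zero [seq c k j | k <- iota i.+1 (m - i)])
        (gsum add zero [seq c i l | l <- iota j.+1 (n - j)])).
Proof.
elim: m a b => [|m IH] a b Ha Hb Ham Hbn Hs.
  exists (fun _ j => b j); split=> //; split; [|split].
  - by move=> i j _; apply: (ge0_Gamma_prefix Hb Hbn).
  - by case=> // _; rewrite -psum1.
  - by move=> j _; apply: esym; apply: psum1.
rewrite psumS in Hs.
have [c1 [c2 [Hc [F1 [F2 [F3 F4]]]]]] :=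
  decomposition_2_n (Ha 0 erefl) (psum_tail_ge0 Ha Ham) Hb Hbn Hs.
have Ec2 j : (j < n)%N -> E (c2 j).
  move=> Hj; have [Hc1 Hc2] := Hc j (ltnW Hj).
  apply: inGamma_le (Hb j Hj) Hc2 _.
  by rewrite F3 ?(ltnW Hj) //; apply: le_addl_ge0.
have [e [[He [G1 G2]] G3]] :=
  IH (fun i => a i.+1) c2 (fun i Hi => Ha i.+1 Hi) Ec2 Ham (proj2 (Hc n (leqnn n))) F2.
exists (fun i j => if i is k.+1 then e k j else c1 j); split; [split; [|split]|].
- by case=> [|i] j Hi Hj; [case: (Hc j Hj) | apply: He].
- by case=> [|i] Hi; [apply: F1 | apply: G1].
- by move=> j Hj; rewrite -/(psum _ m.+2) psumS (F3 j Hj) (G2 j Hj).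
- case=> [|i] j Hi Hj; rewrite map_iotaS; last by rewrite subSS; apply: G3.
  by have := F4 j Hj; rewrite (G2 j (ltnW Hj)).
Qed.

End Decomposition.

Theorem proposition3p5 (T : Type) (add : T -> T -> T) (opp : T -> T) (zero : T)
  (le : T -> T -> Prop) (u : T)
  (Hpog : is_pogroup add opp zero le)
  (Hunit : strong_unit add zero le u)
  (Hrip : RIP le)
  (m n : nat) (Hm : (1 <= m)%N) (Hn : (1 <= n)%N) (a b : nat -> T)
  (Hsum : gsum add zero [seq a i | i <- iota 0 m] = gsum add zero [seq b j | j <- iota 0 n])
  (Ha : forall i, (i < m.-1)%N -> inGamma zero le u (a i))
  (Hb : forall j, (j < n.-1)%N -> inGamma zero le u (b j))
  (Ham : le zero (a m.-1)) (Hbn : le zero (b n.-1)) :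
  (RDP_Gamma add zero le u ->
     exists c : nat -> nat -> T, mnRDP add zero le m n a b c) /\
  (RDP1_Gamma add zero le u ->
     exists c : nat -> nat -> T, mnRDP add zero le m n a b c /\ mnRDP1_com add zero le m n c).
Proof.
case: m Hm Hsum Ha Ham => // m _ Hsum Ha Ham; case: n Hn Hsum Hb Hbn => // n _ Hsum Hb Hbn.
split=> Hrdp.
- have [c [Hc _]] := decomposition_m_n Hpog Hrip (RDP_Gamma_withT Hrdp) Ha Hb Ham Hbn Hsum.
  by exists c.
- have HQ := RDP_Gamma_with_com Hpog Hrdp.
  have [c Hc] := decomposition_m_n Hpog Hrip HQ Ha Hb Ham Hbn Hsum.
  by exists c.
Qed.
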